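(* Let $k\in\mathbb{F}$ be nonzero and for $j\in\tfrac12\mathbb{N}^+$ let $D^{(j)}=\mathrm{diag}(1,k,k^2,\dots,k^{2j})$. Then for all $j_1,j_2\in\tfrac12\mathbb{N}^+$, \[ \big(D^{(j_1)}\otimes D^{(j_2)}\big)R^{(j_1,j_2)}(t)=R^{(j_1,j_2)}(t)\big(D^{(j_1)}\otimes D^{(j_2)}\big). \]
   Context: $\mathbb{F}$ is a field of characteristic zero in which every element has a square root; $q\in\mathbb{F}$ nonzero, not a root of unity, with fixed square root $q^{1/2}$ ($q^{k/2}:=(q^{1/2})^{k}$ for integers); other $(\cdot)^{1/2}$ are fixed square roots in $\mathbb{F}$. $[n]_q=\frac{q^n-q^{-n}}{q-q^{-1}}$, $c(t)=t-t^{-1}$, $\tfrac12\mathbb{N}^+=\{\tfrac12,1,\tfrac32,\dots\}$, $t$ an indeterminate, $\otimes$ Kronecker product. Leg notation: for factors $\mathbb{F}^{n_1}\otimes\mathbb{F}^{n_2}\otimes\mathbb{F}^{n_3}$, $X_{12}=X\otimes I_{n_3}$, $X_{23}=I_{n_1}\otimes X$, $X_{13}=P(X\otimes I_{n_2})P$ with $P$ the flip of factors 2,3; for non-square $Y$, $Y_{12}=Y\otimes I_{n_3}$, $Y_{23}=I_{n_1}\otimes Y$. For $j\in\tfrac12\mathbb{N}^+$: $\mathcal{E}^{(j+\frac12)}$ is $(4j+2)\times(2j+2)$ with only nonzero entries $\mathcal{E}_{(a,a)}=\big(\frac{[2j+2-a]_q}{[2j+1]_q}\big)^{1/2}$, $\mathcal{E}_{(a+2j+1,a+1)}=\big(\frac{[a]_q}{[2j+1]_q}\big)^{1/2}$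 ($1\le a\le 2j+1$); $\mathcal{F}^{(j+\frac12)}$ is $(2j+2)\times(4j+2)$ with only nonzero entries $\mathcal{F}_{(a,a)}=\frac{([2j+2-a]_q[2j+1]_q)^{1/2}}{[2j+2-a]_q+[a-1]_q}$, $\mathcal{F}_{(a+1,a+2j+1)}=\frac{([a]_q[2j+1]_q)^{1/2}}{[2j+1-a]_q+[a]_q}$ ($1\le a\le 2j+1$). $R^{(\frac12,\frac12)}(t)$ is the $4\times4$ matrix with rows $(c(qt),0,0,0),(0,c(t),c(q),0),(0,c(q),c(t),0),(0,0,0,c(qt))$; recursively $R^{(\frac12,j+\frac12)}(t)=\mathcal{F}^{(j+\frac12)}_{23}R^{(\frac12,j)}_{13}(q^{-1/2}t)R^{(\frac12,\frac12)}_{12}(q^{j}t)\mathcal{E}^{(j+\frac12)}_{23}$ (factor sizes $2,2,2j+1$) and $R^{(j_1+\frac12,j_2)}(t)=\mathcal{F}^{(j_1+\frac12)}_{12}R^{(\frac12,j_2)}_{13}(q^{-j_1}t)R^{(j_1,j_2)}_{23}(q^{1/2}t)\mathcal{E}^{(j_1+\frac12)}_{12}$ (factor sizes $2,2j_1+1,2j_2+1$). *)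

(* Kronecker product = [tensmx] from mathcomp-real-closed
   (row-major: index (i1,i2) <-> i1 * n2 + i2). *)
From HB Require Import structures.
From mathcomp Require Import all_boot all_order all_algebra.
From mathcomp Require Export fraction.
From mathcomp.real_closed Require Export mxtens.
Set Implicit Arguments. Unset Strict Implicit. Unset Printing Implicit Defensive.
Import Order.TTheory GRing.Theory Num.Theory.
Local Open Scope ring_scope.

(* Conventions: a spin j in (1/2)N^+ is encoded by n : nat with 2j = n+1,
   so the dimension 2j+1 is n.+2.  The indeterminate t lives in the field of
   rational functions T := {fraction {poly F}}, and t := 'X. *)

Section Rmatrices.
Variable F : fieldType.
Variable sq : F -> F.
Variables q qh : F.        (* q and its fixed square root q^{1/2} *)

Definition T := {fraction {poly F}}.
Definition emb (a : F) : T := FracField.tofrac (a%:P).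
Definition tX : T := FracField.tofrac ('X : {poly F}).

Definition qnum (n : nat) : F := (q ^+ n - q ^- n) / (q - q^-1).

Definition cfun (x : T) : T := x - x^-1.

Definition Dmx (k : F) (n : nat) : 'M[F]_(n.+2) := diag_mx (\row_(i < n.+2) k ^+ i).

(* E^{(j+1/2)}, 2j = n+1: (4j+2) x (2j+2) matrix, 0-based indices *)
Definition Emx (n : nat) : 'M[F]_(2 * n.+2, n.+3) :=
  \matrix_(i, l)
    if (val i == val l) && (val i < n.+2)%N then
      sq (qnum (n.+2 - i) / qnum n.+2)
    else if (val i == val l + n.+1)%N && (0 < val l)%N then
      sq (qnum l / qnum n.+2)
    else 0.

(* F^{(j+1/2)}, 2j = n+1: (2j+2) x (4j+2) matrix, 0-based indices *)
Definition Fmx (n : nat) : 'M[F]_(n.+3, 2 * n.+2) :=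
  \matrix_(r, c)
    if (val r == val c) && (val r < n.+2)%N then
      sq (qnum (n.+2 - r) * qnum n.+2) / (qnum (n.+2 - r) + qnum r)
    else if (val c == val r + n.+1)%N && (0 < val r)%N then
      sq (qnum r * qnum n.+2) / (qnum (n.+2 - r) + qnum r)
    else 0.

(* flip of the last two tensor factors:  F^a (x) F^c (x) F^b -> F^a (x) F^b (x) F^c *)
Definition flipmx (a b c : nat) : 'M[T]_(a * (b * c), a * (c * b)) :=
  \matrix_(i, j)
    let i1 := (mxtens_unindex i).1 in let i23 := (mxtens_unindex i).2 in
    let j1 := (mxtens_unindex j).1 in let j32 := (mxtens_unindex j).2 in
    ((i1 == j1) && ((mxtens_unindex i23).1 == (mxtens_unindex j32).2)
                && ((mxtens_unindex i23).2 == (mxtens_unindex j32).1))%:R.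

Definition leg12 (a b c : nat) (X : 'M[T]_(a * b)) : 'M[T]_(a * (b * c)) :=
  castmx (esym (mulnA a b c), esym (mulnA a b c)) (X *t (1%:M : 'M[T]_c)).
Definition leg23 (a b c : nat) (X : 'M[T]_(b * c)) : 'M[T]_(a * (b * c)) :=
  (1%:M : 'M[T]_a) *t X.
Definition leg13 (a b c : nat) (X : 'M[T]_(a * c)) : 'M[T]_(a * (b * c)) :=
  flipmx a b c
  *m castmx (esym (mulnA a c b), esym (mulnA a c b)) (X *t (1%:M : 'M[T]_b))
  *m flipmx a c b.

Definition R11 (t : T) : 'M[T]_(2 * 2) :=
  \matrix_(i, j)
    if val i == val j then
      (if (val i == 0%N) || (val i == 3%N) then cfun (emb q * t) else cfun t)
    else if ((val i == 1%N) && (val j == 2%N)) || ((val i == 2%N) && (val j == 1%N))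
    then cfun (emb q) else 0.

(* R^{(1/2,j)}(t), 2j = n+1; recursion R^{(1/2,j+1/2)}(t) =
   F_{23} R^{(1/2,j)}_{13}(q^{-1/2} t) R^{(1/2,1/2)}_{12}(q^j t) E_{23},
   factor sizes 2, 2, 2j+1. *)
Fixpoint Rhalf (n : nat) (t : T) : 'M[T]_(2 * n.+2) :=
  match n return 'M[T]_(2 * n.+2) with
  | 0 => R11 t
  | m.+1 =>
      ((1%:M : 'M[T]_2) *t map_mx emb (Fmx m))
      *m @leg13 2 2 m.+2 (Rhalf m (emb qh^-1 * t))
      *m @leg12 2 2 m.+2 (R11 (emb qh ^+ m.+1 * t))
      *m ((1%:M : 'M[T]_2) *t map_mx emb (Emx m))
  end.

(* R^{(j1,j2)}(t), 2 j1 = n1+1, 2 j2 = n2+1; recursion R^{(j1+1/2,j2)}(t) =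
   F_{12} R^{(1/2,j2)}_{13}(q^{-j1} t) R^{(j1,j2)}_{23}(q^{1/2} t) E_{12},
   factor sizes 2, 2j1+1, 2j2+1. *)
Fixpoint Rmat (n1 n2 : nat) (t : T) : 'M[T]_(n1.+2 * n2.+2) :=
  match n1 return 'M[T]_(n1.+2 * n2.+2) with
  | 0 => Rhalf n2 t
  | m.+1 =>
      castmx (erefl, esym (mulnA 2 m.+2 n2.+2))
        (map_mx emb (Fmx m) *t (1%:M : 'M[T]_(n2.+2)))
      *m @leg13 2 m.+2 n2.+2 (Rhalf n2 (emb qh ^- m.+1 * t))
      *m @leg23 2 m.+2 n2.+2 (Rmat m n2 (emb qh * t))
      *m castmx (esym (mulnA 2 m.+2 n2.+2), erefl)
        (map_mx emb (Emx m) *t (1%:M : 'M[T]_(n2.+2)))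
  end.

End Rmatrices.

(* Give the basis vector e_i of F^(2j+1) the weight i, and e_i (x) e_l the
   weight i + l.  The matrix D^(j1) (x) D^(j2) acts on a vector of weight w by
   k^w, so it commutes with every matrix that only connects basis vectors of
   equal weight.  R^(1/2,1/2)(t), E, F, the flip and the identity have this
   property, and it is stable under products, Kronecker products and hence leg
   notation; by induction along the two recursions so do all R^(j1,j2)(t). *)
From HB Require Import structures.
From mathcomp Require Import all_boot all_order all_algebra.
From mathcomp Require Import fraction.
From mathcomp.real_closed Require Import mxtens.
Import GRing.Theory.
Local Open Scope ring_scope.

Definition tens_wt {m n} (w1 : 'I_m -> nat) (w2 : 'I_n -> nat)
    (i : 'I_(m * n)) :=
  (w1 (mxtens_unindex i).1 + w2 (mxtens_unindex i).2)%N.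

Lemma tens_wtA {a b c wa wb wc} (e : (a * (b * c) = a * b * c)%N) i :
  tens_wt (tens_wt wa wb) wc (cast_ord e i) = tens_wt wa (tens_wt wb wc) i.
Proof.
rewrite /tens_wt addnA; congr (_ + _ + _); [congr wa|congr wb|congr wc];
  apply: val_inj => /=; move: (val i) => v.
- by rewrite (mulnC b c) divnMA.
- exact: modn_divl.
- by rewrite modn_dvdm // dvdn_mull.
Qed.

Section WeightPreserving.
Context {R : pzRingType}.

Definition wt_preserving {m n} (w1 : 'I_m -> nat) (M : 'M[R]_(m, n)) w2 :=
  forall i j, M i j != 0 -> w1 i = w2 j.

Lemma mulr_neq0l {a b : R} : a * b != 0 -> a != 0.
Proof. by apply: contra_neq => ->; rewrite mul0r. Qed.

Lemma mulr_neq0r {a b : R} : a * b != 0 -> b != 0.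
Proof. by apply: contra_neq => ->; rewrite mulr0. Qed.

Lemma wt_preserving_mul {m n p w1 w2 w3} {A : 'M[R]_(m, n)} {B : 'M[R]_(n, p)} :
  wt_preserving w1 A w2 -> wt_preserving w2 B w3 ->
  wt_preserving w1 (A *m B) w3.
Proof.
move=> HA HB i j; rewrite mxE => ABij.
have [l /= ABl | AB0] := pickP (fun l => A i l * B l j != 0); last first.
  by rewrite big1 ?eqxx // in ABij => l _; apply/eqP/negbFE/AB0.
by rewrite (HA _ _ (mulr_neq0l ABl)) (HB _ _ (mulr_neq0r ABl)).
Qed.

Lemma wt_preserving_tens {m n p r w1 w2 v1 v2}
    {A : 'M[R]_(m, n)} {B : 'M[R]_(p, r)} :
  wt_preserving w1 A w2 -> wt_preserving v1 B v2 ->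
  wt_preserving (tens_wt w1 v1) (A *t B) (tens_wt w2 v2).
Proof.
move=> HA HB i j; rewrite mxE => ABij.
by rewrite /tens_wt (HA _ _ (mulr_neq0l ABij)) (HB _ _ (mulr_neq0r ABij)).
Qed.

Lemma wt_preserving1 {n} (w : 'I_n -> nat) : wt_preserving w 1%:M w.
Proof.
by move=> i j; rewrite mxE; have [->|_] := eqVneq i j; rewrite ?mulr0n ?eqxx.
Qed.

Lemma wt_preserving_castmx {m n m' n'} {e1 : m = m'} {e2 : n = n'}
    {w1 w2 w1' w2'} {M : 'M[R]_(m, n)} :
  (forall i, w1' i = w1 (cast_ord (esym e1) i)) ->
  (forall j, w2' j = w2 (cast_ord (esym e2) j)) ->
  wt_preserving w1 M w2 -> wt_preserving w1' (castmx (e1, e2) M) w2'.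
Proof. by move=> e1w e2w HM i j; rewrite castmxE e1w e2w; apply: HM. Qed.

Lemma diag_mx_wt_comm (x : R) {m n w1 w2} {M : 'M[R]_(m, n)} :
  (forall i j, GRing.comm (M i j) x) -> wt_preserving w1 M w2 ->
  diag_mx (\row_i x ^+ w1 i) *m M = M *m diag_mx (\row_j x ^+ w2 j).
Proof.
move=> Mx HM; rewrite mul_diag_mx mul_mx_diag; apply/matrixP => i j.
rewrite !mxE.
have [->|/HM ->] := eqVneq (M i j) 0; first by rewrite mulr0 mul0r.
exact/esym/commrX.
Qed.

End WeightPreserving.

Lemma wt_preserving_map {R S : pzRingType} {f : R -> S} {m n}
    {w1 : 'I_m -> nat} {w2 : 'I_n -> nat} {M : 'M[R]_(m, n)} :
  f 0 = 0 -> wt_preserving w1 M w2 -> wt_preserving w1 (map_mx f M) w2.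
Proof.
by move=> f0 HM i j; rewrite mxE => fM; apply/HM/(contra_neq _ fM) => ->.
Qed.

Section Rmatrices.
Variables (F : fieldType) (sq : F -> F) (q qh : F).

Local Notation wt := (@nat_of_ord _).

Lemma emb0 : emb (0 : F) = 0.
Proof. by rewrite /emb polyC0 rmorph0. Qed.

Lemma wt_preserving_flipmx {a b c wa wb wc} :
  wt_preserving (tens_wt wa (tens_wt wb wc)) (flipmx F a b c)
                (tens_wt wa (tens_wt wc wb)).
Proof.
move=> i j; rewrite mxE /=.
case/boolP: (_ && _ && _) => [/andP[/andP[/eqP e1 /eqP e2] /eqP e3] _|_];
  last by rewrite eqxx.
by rewrite /tens_wt /= e1 e2 e3; congr (_ + _); apply: addnC.
Qed.

Lemma wt_preserving_leg12 {a b c wa wb wc} {X : 'M[T F]_(a * b)} :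
  wt_preserving (tens_wt wa wb) X (tens_wt wa wb) ->
  wt_preserving (tens_wt wa (tens_wt wb wc)) (leg12 c X)
                (tens_wt wa (tens_wt wb wc)).
Proof.
move=> HX.
apply: wt_preserving_castmx (wt_preserving_tens HX (wt_preserving1 wc));
  by move=> i; rewrite tens_wtA.
Qed.

Lemma wt_preserving_leg23 {a b c wa wb wc} {X : 'M[T F]_(b * c)} :
  wt_preserving (tens_wt wb wc) X (tens_wt wb wc) ->
  wt_preserving (tens_wt wa (tens_wt wb wc)) (leg23 a X)
                (tens_wt wa (tens_wt wb wc)).
Proof. exact: wt_preserving_tens (wt_preserving1 wa). Qed.

Lemma wt_preserving_leg13 {a b c wa wb wc} {X : 'M[T F]_(a * c)} :
  wt_preserving (tens_wt wa wc) X (tens_wt wa wc) ->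
  wt_preserving (tens_wt wa (tens_wt wb wc)) (leg13 b X)
                (tens_wt wa (tens_wt wb wc)).
Proof.
move=> HX; apply: (wt_preserving_mul _ wt_preserving_flipmx).
apply: (wt_preserving_mul wt_preserving_flipmx).
apply: wt_preserving_castmx (wt_preserving_tens HX (wt_preserving1 wb));
  by move=> i; rewrite tens_wtA.
Qed.

Lemma tens_wt_shift {n} {l : 'I_n.+3} {i : 'I_(2 * n.+2)} :
  val i = (val l + n.+1)%N -> (0 < val l)%N -> tens_wt wt wt i = val l.
Proof.
case: i l => [v hv] [[|l] //= hl] e _; subst v; rewrite /tens_wt /=.
have -> : (l.+1 + n.+1 = 1 * n.+2 + l)%N by rewrite mul1n addSnnS addnC.
by rewrite divnMDl // modnMDl divn_small ?modn_small.
Qed.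

Lemma tens_wt_diag {n} {l : 'I_n.+3} {i : 'I_(2 * n.+2)} :
  val i = val l -> (val i < n.+2)%N -> tens_wt wt wt i = val l.
Proof. by move=> <- lt_i; rewrite /tens_wt /= divn_small ?modn_small. Qed.

Lemma wt_preserving_Emx n :
  wt_preserving (tens_wt wt wt) (map_mx (@emb F) (Emx sq q n)) wt.
Proof.
apply/wt_preserving_map; first exact: emb0.
move=> i l; rewrite mxE.
case: ifP => [/andP[/eqP e lt] _|_]; first exact: tens_wt_diag.
case: ifP => [/andP[/eqP e lt] _|_]; first exact: tens_wt_shift.
by rewrite eqxx.
Qed.

Lemma wt_preserving_Fmx n :
  wt_preserving wt (map_mx (@emb F) (Fmx sq q n)) (tens_wt wt wt).
Proof.
apply/wt_preserving_map; first exact: emb0.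
move=> l i; rewrite mxE.
case: ifP => [/andP[/eqP e lt] _|_].
  by rewrite (tens_wt_diag (esym e)) // -e.
case: ifP => [/andP[/eqP e lt] _|_]; first by rewrite (tens_wt_shift e).
by rewrite eqxx.
Qed.

Lemma wt_preserving_R11 (t : T F) :
  wt_preserving (tens_wt wt wt) (R11 q t) (tens_wt wt wt).
Proof.
move=> [[|[|[|[|i]]]] Hi] //= [[|[|[|[|j]]]] Hj] //=; rewrite mxE /=;
  by rewrite ?eqxx.
Qed.

Lemma wt_preserving_Rhalf n (t : T F) :
  wt_preserving (tens_wt wt wt) (Rhalf sq q qh n t) (tens_wt wt wt).
Proof.
elim: n t => [|m IH] t /=; first exact: wt_preserving_R11.
have id2 := @wt_preserving1 (T F) 2 wt.
have F23 := wt_preserving_tens id2 (wt_preserving_Fmx m).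
have E23 := wt_preserving_tens id2 (wt_preserving_Emx m).
apply: (wt_preserving_mul _ E23).
apply: (wt_preserving_mul _ (wt_preserving_leg12 (wt_preserving_R11 _))).
exact: (wt_preserving_mul F23 (wt_preserving_leg13 (IH _))).
Qed.

Lemma wt_preserving_Rmat n1 n2 (t : T F) :
  wt_preserving (tens_wt wt wt) (Rmat sq q qh n1 n2 t) (tens_wt wt wt).
Proof.
elim: n1 t => [|m IH] t /=; first exact: wt_preserving_Rhalf.
have F12 : wt_preserving (tens_wt wt wt)
    (castmx (erefl, esym (mulnA 2 m.+2 n2.+2))
      (map_mx (@emb F) (Fmx sq q m) *t (1%:M : 'M[T F]_(n2.+2))))
    (tens_wt wt (tens_wt wt wt)).
  apply: wt_preserving_castmx
    (wt_preserving_tens (wt_preserving_Fmx m) (wt_preserving1 wt)) => // j.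
  by rewrite tens_wtA.
have E12 : wt_preserving (tens_wt wt (tens_wt wt wt))
    (castmx (esym (mulnA 2 m.+2 n2.+2), erefl)
      (map_mx (@emb F) (Emx sq q m) *t (1%:M : 'M[T F]_(n2.+2))))
    (tens_wt wt wt).
  apply: wt_preserving_castmx
    (wt_preserving_tens (wt_preserving_Emx m) (wt_preserving1 wt)) => // i.
  by rewrite tens_wtA.
apply: (wt_preserving_mul _ E12).
apply: (wt_preserving_mul _ (wt_preserving_leg23 (IH _))).
exact: (wt_preserving_mul F12 (wt_preserving_leg13 (wt_preserving_Rhalf _ _))).
Qed.

Lemma map_Dmx_tens (k : F) n1 n2 :
  map_mx (@emb F) (Dmx k n1 *t Dmx k n2)
  = diag_mx (\row_i emb k ^+ tens_wt (@nat_of_ord n1.+2) (@nat_of_ord n2.+2) i).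
Proof.
apply/matrixP => i j.
case: (mxtens_indexP i) => i1 i2; case: (mxtens_indexP j) => j1 j2.
rewrite mxE tensmxE !mxE /tens_wt mxtens_indexK.
rewrite (can_eq (@mxtens_indexK _ _)) xpair_eqE.
have [<-|ne1] := eqVneq j1 i1; have [<-|ne2] := eqVneq j2 i2;
  rewrite ?mulr1n ?mulr0n ?mul0r ?mulr0 ?emb0 //.
by rewrite -exprD /emb -!rmorphXn.
Qed.

End Rmatrices.

Theorem lemmaB2 (F : fieldType) (sq : F -> F) (q qh : F) :
  [pchar F] =i pred0 ->
  (forall x : F, sq x ^+ 2 = x) ->
  q != 0 ->
  (forall n : nat, (0 < n)%N -> q ^+ n != 1) ->
  qh ^+ 2 = q ->
  forall k : F, k != 0 ->
  forall n1 n2 : nat,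
    map_mx (emb (F:=F)) (Dmx k n1 *t Dmx k n2) *m Rmat sq q qh n1 n2 (tX F)
    = Rmat sq q qh n1 n2 (tX F) *m map_mx (emb (F:=F)) (Dmx k n1 *t Dmx k n2).
Proof.
move=> _ _ _ _ _ k _ n1 n2; rewrite map_Dmx_tens.
apply: diag_mx_wt_comm; last exact: wt_preserving_Rmat.
by move=> i j; apply: mulrC.
Qed.
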